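(* $17\notin\operatorname{Spec}(32_{65})$.
   Context: $32_{65}$ is the finite integral symmetric relation algebra with atoms $1'$, $a$, $b$, $c$, all symmetric, in which a diversity cycle $xyz$ (with $x,y,z\in\{a,b,c\}$) is mandatory (i.e. $x;y\ge z$) if it involves $a$ and forbidden (i.e. $x;y\cdot z=0$) otherwise. A representation over a set $U$ is an embedding into the full relation algebra on $U\times U$. $\operatorname{Spec}(A)$ is the set of cardinals $\alpha\le\omega$ such that $A$ has a representation over a set of cardinality $\alpha$. *)

From HB Require Import structures.
From mathcomp Require Import all_boot.
Set Implicit Arguments. Unset Strict Implicit. Unset Printing Implicit Defensive.

Inductive atom := one | at_a | at_b | at_c.

Definition atom_code (x : atom) : 'I_4 :=
  match x with one => inord 0 | at_a => inord 1 | at_b => inord 2 | at_c => inord 3 end.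
Definition atom_decode (i : 'I_4) : atom :=
  match val i with 0 => one | 1 => at_a | 2 => at_b | _ => at_c end.
Lemma atom_codeK : cancel atom_code atom_decode.
Proof. by case; rewrite /atom_decode /= inordK. Qed.
HB.instance Definition _ := Equality.copy atom (can_type atom_codeK).
HB.instance Definition _ := Finite.copy atom (can_type atom_codeK).

(* Allowed (consistent) cycles: cyc x y z holds iff x;y >= z for atoms. *)
Definition cyc (x y z : atom) : bool :=
  if x == one then y == z
  else if y == one then x == z
  else if z == one then x == y     (* all atoms are symmetric: x;x^ = x;x >= 1' *)
  else [|| x == at_a, y == at_a | z == at_a].

(* Elements of 32_65 are sets of atoms (it is the complex algebra of its atom structure). *)
Definition RA := {set atom}.
Definition ra_join (X Y : RA) : RA := X :|: Y.
Definition ra_compl (X : RA) : RA := ~: X.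
Definition ra_id : RA := [set one].
Definition ra_conv (X : RA) : RA := X. (* all atoms symmetric *)
Definition ra_comp (X Y : RA) : RA :=
  [set z | [exists x in X, exists y in Y, cyc x y z]].

Definition representation (U : finType) (h : RA -> U -> U -> bool) : Prop :=
  injective h /\
  (forall X Y u v, h (ra_join X Y) u v = h X u v || h Y u v) /\
  (forall X u v, h (ra_compl X) u v = ~~ h X u v) /\
  (forall u v, h ra_id u v = (u == v)) /\
  (forall X u v, h (ra_conv X) u v = h X v u) /\
  (forall X Y u v, h (ra_comp X Y) u v = [exists w, h X u w && h Y w v]).

Definition in_Spec (n : nat) : Prop :=
  exists (U : finType) (h : RA -> U -> U -> bool), #|U| = n /\ representation h.

From Pilot Require Import Defs.
From mathcomp Require Import all_boot.
Set Implicit Arguments.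
Unset Strict Implicit.
Unset Printing Implicit Defensive.

(* A representation labels every pair of points by the unique atom containing
   it; call a pair red if its label is a and green if it is b or c.  Green
   triangles are forbidden, while a;a >= b, c and x;y >= a for x, y in {b, c}
   are mandatory.  Hence every red pair has four common green neighbours, one
   for each pair of labels (x, y), and any green edge extends to a pentagon with
   red sides and green diagonals.  A point green to both ends of two distinct
   sides would close a green triangle with a diagonal, so the common green
   neighbourhoods of the five sides are disjoint and there are at least
   5 * 4 = 20 points. *)

Lemma sum_card_le_pairwise_disjoint (I T : finType) (F : I -> {set T}) :
  (forall i j, i != j -> [disjoint F i & F j]) -> \sum_i #|F i| <= #|T|.
Proof.
move=> disjF.
have card_sum i : #|F i| = \sum_t (t \in F i) by rewrite -sum1_card big_mkcond.
under eq_bigr => i _ do rewrite card_sum.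
rewrite exchange_big -sum1_card; apply: leq_sum => t _.
case: (pickP [pred i | t \in F i]) => [i /= ti | none]; last first.
  by rewrite big1 // => i _; have /= -> := none i.
rewrite (bigD1 i) //= ti big1 // => j nji.
by rewrite (disjointFr (disjF i j _)) // eq_sym.
Qed.

Lemma neq_ord5_ordS (i j : 'I_5) : i != j ->
  [|| j == ordS i, j == ordS (ordS i), i == ordS j | i == ordS (ordS j)].
Proof. by case: i j => -[|[|[|[|[|//]]]]] ? [[|[|[|[|[|//]]]]] ?]. Qed.

(* Comparison of atoms goes through [inord], which does not reduce; this
   rewrite rule makes closed atom comparisons compute. *)
Lemma eq_atomE (x y : atom) : (x == y) =
  match x, y with
  | Defs.one, Defs.one | at_a, at_a | at_b, at_b | at_c, at_c => true
  | _, _ => false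
  end.
Proof. by case: x y => [] []; rewrite ?eqxx //; apply/eqP. Qed.

Lemma mem_ra_comp1 x y z : (z \in ra_comp [set x] [set y]) = cyc x y z.
Proof.
rewrite inE; apply/existsP/idP => [[_ /andP[/set1P-> /existsP[y']]] | xyz].
  by case/andP=> /set1P->.
by exists x; rewrite set11; apply/existsP; exists y; rewrite set11.
Qed.

Section RepresentationAtoms.

Variables (U : finType) (h : RA -> U -> U -> bool).
Hypothesis hrep : representation h.

Lemma h_setU (X Y : RA) (u v : U) : h (X :|: Y) u v = h X u v || h Y u v.
Proof. by case: hrep => _ [hU _]; apply: hU. Qed.

Lemma h_setC (X : RA) (u v : U) : h (~: X) u v = ~~ h X u v.
Proof. by case: hrep => _ [_ [hC _]]; apply: hC. Qed.

Lemma h_set1_one (u v : U) : h [set Defs.one] u v = (u == v).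
Proof. by case: hrep => _ [_ [_ [hI _]]]; apply: hI. Qed.

Lemma h_sym (X : RA) (u v : U) : h X u v = h X v u.
Proof. by case: hrep => _ [_ [_ [_ [hV _]]]]; apply: hV. Qed.

Lemma h_ra_comp (X Y : RA) (u v : U) :
  h (ra_comp X Y) u v = [exists w, h X u w && h Y w v].
Proof. by case: hrep => _ [_ [_ [_ [_ hM]]]]; apply: hM. Qed.

Lemma h_setT (u v : U) : h [set: atom] u v.
Proof. by rewrite -(setUCr set0) h_setU h_setC orbN. Qed.

Lemma h_set0 (u v : U) : h set0 u v = false.
Proof. by rewrite -setCT h_setC h_setT. Qed.

Lemma h_setI (X Y : RA) (u v : U) : h (X :&: Y) u v = h X u v && h Y u v.
Proof.
by rewrite -[X :&: Y]setCK setCI h_setC h_setU !h_setC negb_or !negbK.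
Qed.

Lemma h_subset (X Y : RA) (u v : U) : X \subset Y -> h X u v -> h Y u v.
Proof. by move=> /setUidPr <-; rewrite h_setU => ->. Qed.

Lemma h_set1_mem (X : RA) z (u v : U) : h X u v -> h [set z] u v -> z \in X.
Proof.
move=> hX hz; apply: contraT => zX.
suff: X :&: [set z] = set0 by move=> XIz; rewrite -(h_set0 u v) -XIz h_setI hX.
apply/setP => t; rewrite !inE.
by have [->|] := eqP; rewrite ?(negbTE zX) ?andbF.
Qed.

Lemma h_atom_exists (u v : U) : exists x, h [set x] u v.
Proof.
have := h_setT u v.
rewrite (_ : [set: atom] = [set Defs.one; at_a; at_b; at_c]).
  by rewrite !h_setU -!orbA => /or4P[] hx; eexists; exact: hx.
by apply/setP => -[]; rewrite !inE eqxx ?orbT.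
Qed.

Definition atom_of (u v : U) : atom := odflt Defs.one [pick x | h [set x] u v].

Lemma atom_ofP x (u v : U) : h [set x] u v = (atom_of u v == x).
Proof.
rewrite /atom_of; case: pickP => [y /= hy | none] /=.
  by apply/idP/eqP => [/(h_set1_mem hy)/set1P | <-].
by have [z hz] := h_atom_exists u v; have /= := none z; rewrite hz.
Qed.

Lemma atom_of_sym (u v : U) : atom_of u v = atom_of v u.
Proof. by apply/eqP; rewrite -atom_ofP h_sym atom_ofP. Qed.

Lemma atom_of_eq_one (u v : U) : (atom_of u v == Defs.one) = (u == v).
Proof. by rewrite -atom_ofP h_set1_one. Qed.

Lemma atom_of_cyc (u w v : U) : cyc (atom_of u w) (atom_of w v) (atom_of u v).
Proof.
rewrite -mem_ra_comp1; apply: (h_set1_mem (u := u) (v := v)).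
  by rewrite h_ra_comp; apply/existsP; exists w; rewrite !atom_ofP !eqxx.
by rewrite atom_ofP.
Qed.

Lemma atom_of_mandatory x y (u v : U) :
  cyc x y (atom_of u v) -> exists w, atom_of u w = x /\ atom_of w v = y.
Proof.
rewrite -mem_ra_comp1 -sub1set => /h_subset/(_ (_ : h _ u v)).
rewrite atom_ofP h_ra_comp => /(_ (eqxx _))/existsP[w].
by rewrite !atom_ofP => /andP[/eqP uw /eqP wv]; exists w.
Qed.

End RepresentationAtoms.

Section AtomNetwork.

Variables (U : finType) (lab : U -> U -> atom).
Hypotheses (lab_sym : forall u v, lab u v = lab v u)
  (lab_eq_one : forall u v, (lab u v == Defs.one) = (u == v))
  (lab_cyc : forall u w v, cyc (lab u w) (lab w v) (lab u v))
  (lab_mandatory : forall x y u v,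
     cyc x y (lab u v) -> exists w, lab u w = x /\ lab w v = y).

Definition red (u v : U) : bool := lab u v == at_a.
Definition green (u v : U) : bool := lab u v \in [set at_b; at_c].
Definition common_green (u v : U) : {set U} := [set w | green u w && green w v].
Definition pentagon (p : 'I_5 -> U) : Prop :=
  forall i, red (p i) (p (ordS i)) /\ green (p i) (p (ordS (ordS i))).

Lemma red_sym u v : red u v = red v u.
Proof. by rewrite /red lab_sym. Qed.

Lemma green_sym u v : green u v = green v u.
Proof. by rewrite /green lab_sym. Qed.

Lemma red_not_green u v : red u v -> ~~ green u v.
Proof. by rewrite /red /green => /eqP->; rewrite !inE !eq_atomE. Qed.

Lemma no_green_triangle u w v : green u w -> green w v -> green u v -> False.
Proof.
have := lab_cyc u w v; rewrite /green.
by case: (lab u w) (lab w v) (lab u v) => [] [] []; rewrite /cyc !inE !eq_atomE.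
Qed.

Lemma red_green_path u w v : green u w -> green w v -> u != v -> red u v.
Proof.
move=> uw wv; rewrite -lab_eq_one /red.
have := no_green_triangle uw wv; rewrite /green.
by case: (lab u v); rewrite !inE !eq_atomE // => /(_ isT).
Qed.

Lemma exists_green u : exists v, green u v.
Proof.
have /eqP uu : lab u u == Defs.one by rewrite lab_eq_one.
have /lab_mandatory[v [uv _]] : cyc at_b at_b (lab u u).
  by rewrite uu /cyc !eq_atomE.
by exists v; rewrite /green uv !inE eqxx.
Qed.

Lemma green_common_red u v : green u v -> exists w, red u w /\ red w v.
Proof.
rewrite /green !inE => uv.
have /lab_mandatory[w [uw wv]] : cyc at_a at_a (lab u v).
  by case/orP: uv => /eqP->; rewrite /cyc !eq_atomE.
by exists w; rewrite /red uw wv.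
Qed.

Lemma red_common_green u v : red u v -> exists w, green u w /\ green w v.
Proof.
move=> /eqP uv.
have /lab_mandatory[w [uw wv]] : cyc at_b at_b (lab u v).
  by rewrite uv /cyc !eq_atomE.
by exists w; rewrite /green uw wv !inE !eqxx.
Qed.

Lemma four_le_card_common_green u v : red u v -> 4 <= #|common_green u v|.
Proof.
move=> /eqP uv; pose B := [set at_b; at_c].
have BB : setX B B \subset [set (lab u w, lab w v) | w in common_green u v].
  apply/subsetP => -[x y]; rewrite inE /= => /andP[Bx By].
  have /lab_mandatory[w [uw wv]] : cyc x y (lab u v).
    move: Bx By; rewrite uv !inE => /orP[]/eqP-> /orP[]/eqP->;
      by rewrite /cyc !eq_atomE.
  by apply/imsetP; exists w; rewrite ?uw ?wv // inE /green uw wv Bx By.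
apply: leq_trans (leq_imset_card _ _); apply: leq_trans (subset_leq_card BB).
by rewrite cardsX cards2 eq_atomE.
Qed.

Lemma exists_pentagon (u : U) : exists p, pentagon p.
Proof.
have [v uv] := exists_green u.
have [w [uw wv]] := green_common_red uv.
have [x [ux xw]] := red_common_green uw.
have [y [wy yv]] := red_common_green wv.
have uy : red u y.
  apply: red_green_path uv (_ : green v y) _; first by rewrite green_sym.
  apply: contraTneq wy => <-; rewrite green_sym; exact: red_not_green.
have yx : red y x.
  apply: red_green_path (_ : green y w) (_ : green w x) _;
    try by rewrite green_sym.
  apply: contraTneq ux => <-; apply/negP => uy'.
  exact: no_green_triangle uy' yv uv.
have xv : red x v.
  apply: red_green_path (_ : green x u) uv _; first by rewrite green_sym.
  apply: contraTneq xw => ->; rewrite green_sym; exact: red_not_green.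
exists (fun i => nth u [:: u; y; x; v; w] i).
by case=> -[|[|[|[|[|//]]]]] _ /=;
  split; by [|rewrite red_sym|rewrite green_sym].
Qed.

Lemma pentagon_common_green_disjoint p : pentagon p -> forall i j, i != j ->
  [disjoint common_green (p i) (p (ordS i)) & common_green (p j) (p (ordS j))].
Proof.
move=> pent i j; wlog ji : i j / (j == ordS i) || (j == ordS (ordS i)).
  move=> gen nij; case/or4P: (neq_ord5_ordS nij) => e;
    [apply: gen | apply: gen | rewrite disjoint_sym; apply: gen ..];
    by rewrite ?e ?orbT // eq_sym.
move=> _; apply/pred0P => z /=; apply/negbTE/andP.
rewrite !inE => -[/andP[piz _] /andP[pjz zpj]].
have zfar : green z (p (ordS (ordS i))).
  by case/orP: ji => /eqP ej; rewrite -ej // green_sym.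
exact: no_green_triangle piz zfar (pent i).2.
Qed.

Lemma card_ge20 (u : U) : 20 <= #|U|.
Proof.
have [p pent] := exists_pentagon u.
have disj := pentagon_common_green_disjoint pent.
apply: leq_trans (sum_card_le_pairwise_disjoint disj).
rewrite -[20]/(5 * 4) -{1}(card_ord 5) -sum_nat_const; apply: leq_sum => i _.
exact: four_le_card_common_green (pent i).1.
Qed.

End AtomNetwork.

Theorem mainTheorem10 : ~ in_Spec 17.
Proof.
case=> U [h [cardU hrep]].
have /card_gt0P[u _] : 0 < #|U| by rewrite cardU.
have := card_ge20 (atom_of_sym hrep) (atom_of_eq_one hrep)
  (atom_of_cyc hrep) (atom_of_mandatory hrep) u.
by rewrite cardU.
Qed.
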